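(* Let $n\geq 2$ be an integer and let $f:\mathbb{R}\to\mathbb{R}$ be the continuous function which equals $1$ on $[\frac{1}{n},1-\frac{1}{n}]$, equals $-1$ on $[-1+\frac{1}{n},-\frac{1}{n}]$, equals $0$ for $|t|\geq 1$, and is linear on each of the intervals $[-1,-1+\frac{1}{n}]$, $[-\frac{1}{n},\frac{1}{n}]$ and $[1-\frac{1}{n},1]$. For a positive integer $k$ let $\phi_k(x)=c_k\left(1-\frac{x^2}{4}\right)^{k^2}$, where $c_k>0$ is chosen so that $\int_{-2}^2\phi_k(x)\,dx=1$, and let $P_k(t)=\int_{-1}^1 f(x)\phi_k(t-x)\,dx$ for $t\in\mathbb{R}$. Then: (i) $P_k$ is an odd polynomial of degree $2k^2-1$ with leading coefficient $$a_k=(-1)^{k^2+1}\frac{2c_k k^2}{4^{k^2}}\Big(1-\frac{1}{n}\Big),$$ i.e. $P_k(t)=a_k t^{2k^2-1}+(\text{lower order terms})$. (ii) There is an absolute constant $c>0$ (independent of $k$ and $n$) such that for all $t\in\mathbb{R}$, $$|P_k^{(2k^2-1)}(t)|\geq c\,(2k^2-1)!\,\frac{k^3}{4^{k^2}}.$$ (iii) For every $t\in[-1,1]$, $$P_k(t)=\int_0^2 \big(f(t+x)+f(t-x)\big)\phi_k(x)\,dx.$$ *)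

From Stdlib Require Import Reals Lra Arith Factorial.
From Coquelicot Require Import Coquelicot.
Open Scope R_scope.

Definition trap (n : nat) (t : R) : R :=
  let m := INR n in
  if Rle_dec 1 (Rabs t) then 0
  else if Rle_dec (1 - 1 / m) t then m * (1 - t)
  else if Rle_dec (1 / m) t then 1
  else if Rle_dec (- (1 / m)) t then m * t
  else if Rle_dec (-1 + 1 / m) t then -1
  else - m * (1 + t).

Definition ck (k : nat) : R :=
  / RInt (fun x => (1 - x ^ 2 / 4) ^ (k * k)) (-2) 2.

Definition phik (k : nat) (x : R) : R := ck k * (1 - x ^ 2 / 4) ^ (k * k).

Definition Pk (n k : nat) (t : R) : R :=
  RInt (fun x => trap n x * phik k (t - x)) (-1) 1.

Definition ak (n k : nat) : R :=
  (-1) ^ (k * k + 1) * (2 * ck k * INR (k * k) / 4 ^ (k * k)) * (1 - 1 / INR n).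

From Stdlib Require Import Reals Arith Factorial Lra Lia Psatz ssreflect.
From Coquelicot Require Import Coquelicot.
Open Scope R_scope.

(* Expanding [phik k (t - x) = ck k (1 - (t - x)^2/4)^(k^2)] in powers of [t] shows that
   [Pk n k] is a polynomial of degree at most [2k^2] whose coefficients are integrals of
   [trap n] against polynomials in [x].  Since [trap n] is odd and [phik k] even, [Pk n k]
   is odd, so only odd powers survive; the coefficient of [t^(2k^2-1)] is
   [ck k * k^2 (-1/4)^(k^2-1) / 2 * int x trap(x) dx], and [int x trap(x) dx = 1 - 1/n].
   The top derivative is this coefficient times [(2k^2-1)!]; the bound (ii) follows from
   [ck k >= k/8], since Bernoulli's inequality gives
   [(1 - x^2/4)^(k^2) <= 1 / (1 + k^2 x^2/4)], whose integral is at most [8/k].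
   Part (iii) is the substitution [x = t +- y] in the convolution, using that [trap n]
   vanishes outside [(-1, 1)]. *)

Lemma continuous_Rmax (f g : R -> R) x :
  continuous f x -> continuous g x -> continuous (fun y => Rmax (f y) (g y)) x.
Proof.
move=> Hf Hg.
apply: (continuous_ext (fun y => (f y + g y + Rabs (f y - g y)) / 2)).
  by move=> y; rewrite /Rmax /Rabs; case: Rle_dec; case: Rcase_abs; lra.
apply: continuous_mult; last exact: continuous_const.
apply: continuous_plus; first exact: continuous_plus.
apply: continuous_Rabs_comp; apply: continuous_plus => //; exact: continuous_opp.
Qed.

Lemma continuous_Rmin (f g : R -> R) x :
  continuous f x -> continuous g x -> continuous (fun y => Rmin (f y) (g y)) x.
Proof.
move=> Hf Hg.
apply: (continuous_ext (fun y => - Rmax (- f y) (- g y))).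
  by move=> y; rewrite /Rmax /Rmin; do 2 case: Rle_dec; lra.
by apply: continuous_opp; apply: continuous_Rmax; apply: continuous_opp.
Qed.

Lemma RInt_mult_l (f : R -> R) c a b :
  ex_RInt f a b -> RInt (fun x => c * f x) a b = c * RInt f a b.
Proof. exact: RInt_scal. Qed.

Lemma RInt_quadratic_on (h : R -> R) a b c0 c1 c2 : a <= b ->
  (forall x, a < x < b -> h x = c0 + c1 * x + c2 * x ^ 2) ->
  RInt h a b = c0 * (b - a) + c1 * (b ^ 2 - a ^ 2) / 2 + c2 * (b ^ 3 - a ^ 3) / 3.
Proof.
move=> Hab Hh.
rewrite (RInt_ext h (fun x => c0 + c1 * x + c2 * x ^ 2)); last first.
  by move=> x; rewrite Rmin_left // Rmax_right //; exact: Hh.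
rewrite (is_RInt_unique _ _ _ _ (is_RInt_derive
  (fun x => c0 * x + c1 * x ^ 2 / 2 + c2 * x ^ 3 / 3) _ a b _ _)).
- by rewrite /minus /plus /opp /=; field.
- by move=> x _; auto_derive => //; field.
- by move=> x _; apply: ex_derive_continuous; auto_derive.
Qed.

Lemma RInt_comp_add (f : R -> R) t a b : ex_RInt f (t + a) (t + b) ->
  RInt (fun x => f (t + x)) a b = RInt f (t + a) (t + b).
Proof.
move=> Hf; transitivity (RInt (fun x => scal 1 (f (1 * x + t))) a b).
  by apply: RInt_ext => x _; rewrite /scal /= /mult /= !Rmult_1_l Rplus_comm.
by rewrite (RInt_comp_lin f); rewrite !Rmult_1_l !(Rplus_comm _ t).
Qed.

Lemma RInt_comp_sub (f : R -> R) t a b : ex_RInt f (t - b) (t - a) ->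
  RInt (fun x => f (t - x)) a b = RInt f (t - b) (t - a).
Proof.
move=> Hf; have Ea : -1 * a + t = t - a by ring.
have Eb : -1 * b + t = t - b by ring.
transitivity (RInt (fun x => -1 * scal (-1) (f (-1 * x + t))) a b).
  apply: RInt_ext => x _; rewrite /scal /= /mult /=.
  have -> : -1 * x + t = t - x by ring.
  ring.
rewrite RInt_mult_l; last by apply: ex_RInt_comp_lin; rewrite Ea Eb; exact: ex_RInt_swap.
rewrite (RInt_comp_lin f); last by rewrite Ea Eb; exact: ex_RInt_swap.
by rewrite Ea Eb -(opp_RInt_swap f) // /opp /=; ring.
Qed.

Lemma RInt_supported (g : R -> R) a b c d : c <= a -> b <= d ->
  (forall x, c < x < a -> g x = 0) -> (forall x, b < x < d -> g x = 0) ->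
  (forall u v, ex_RInt g u v) -> RInt g c d = RInt g a b.
Proof.
move=> Hca Hbd Hl Hr Hg.
have Hzero u v : u <= v -> (forall x, u < x < v -> g x = 0) -> RInt g u v = 0.
  move=> Huv Hz; rewrite (RInt_ext _ (fun _ => 0)) ?RInt_const /scal /= /mult /=; first ring.
  by rewrite Rmin_left // Rmax_right //.
rewrite -(RInt_Chasles g c a d) // -(RInt_Chasles g a b d) //.
by rewrite /plus /= Hzero // (Hzero b d) //; ring.
Qed.

Lemma ex_RInt_sum_f_R0 (g : nat -> R -> R) a b N : (forall i, ex_RInt (g i) a b) ->
  ex_RInt (fun x => sum_f_R0 (fun i => g i x) N) a b.
Proof. by move=> Hg; elim: N => [|N IH] /=; [exact: Hg | exact: ex_RInt_plus]. Qed.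

Lemma RInt_sum_f_R0 (g : nat -> R -> R) a b N : (forall i, ex_RInt (g i) a b) ->
  RInt (fun x => sum_f_R0 (fun i => g i x) N) a b = sum_f_R0 (fun i => RInt (g i) a b) N.
Proof.
move=> Hg; elim: N => [//|N IH] /=.
by rewrite -IH; apply: (RInt_plus (fun x => sum_f_R0 (fun i => g i x) N));
  [exact: ex_RInt_sum_f_R0 | exact: Hg].
Qed.

Definition coef_shift (a : nat -> R) (i : nat) : R := if i is S j then a j else 0.

Lemma sum_coef_shift (a : nat -> R) t N :
  sum_f_R0 (fun i => coef_shift a i * t ^ i) (S N) = t * sum_f_R0 (fun i => a i * t ^ i) N.
Proof.
elim: N => [|N IH]; first by rewrite /=; ring.
by rewrite tech5 IH /=; ring.
Qed.

Lemma sum_pow_above (a : nat -> R) t N M : (N <= M)%nat ->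
  (forall i, (N < i)%nat -> a i = 0) ->
  sum_f_R0 (fun i => a i * t ^ i) M = sum_f_R0 (fun i => a i * t ^ i) N.
Proof.
move=> + Ha; elim: M => [|M IH] HNM; first by have -> : N = O by lia.
case: (Nat.eq_dec N (S M)) => [-> //|HN].
by rewrite tech5 IH ?Ha; [ring | lia | lia].
Qed.

Definition odd_part (c : nat -> R) (i : nat) : R := c i * (1 - (-1) ^ i) / 2.

Lemma odd_part_even c i : Nat.Even i -> odd_part c i = 0.
Proof. by case=> j ->; rewrite /odd_part pow_1_even; field. Qed.

Lemma odd_part_odd c i : Nat.Odd i -> odd_part c i = c i.
Proof. by case=> j ->; rewrite /odd_part Nat.add_1_r pow_1_odd; field. Qed.

Lemma odd_poly_expand (f : R -> R) (c : nat -> R) N :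
  (forall t, f (- t) = - f t) -> (forall t, f t = sum_f_R0 (fun i => c i * t ^ i) N) ->
  forall t, f t = sum_f_R0 (fun i => odd_part c i * t ^ i) N.
Proof.
move=> Hodd Hf t.
have -> : f t = / 2 * (f t - f (- t)) by rewrite Hodd; field.
rewrite !Hf -minus_sum scal_sum; apply: sum_eq => i _.
have -> : - t = -1 * t by ring.
by rewrite Rpow_mult_distr /odd_part; field.
Qed.

Lemma is_derive_poly (c : nat -> R) d t :
  is_derive (fun x => sum_f_R0 (fun i => c i * x ^ i) (S d)) t
            (sum_f_R0 (fun i => c (S i) * INR (S i) * t ^ i) d).
Proof.
elim: d => [|d IH].
  by rewrite /=; auto_derive => //; rewrite /=; ring.
apply: (is_derive_plus (fun x => sum_f_R0 (fun i => c i * x ^ i) (S d))) => //.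
have := is_derive_scal _ t (c (S (S d))) _ (is_derive_pow id (S (S d)) t 1 (is_derive_id t)).
by rewrite /= Rmult_1_r -Rmult_assoc.
Qed.

Lemma Derive_n_poly d (c : nat -> R) (f : R -> R) :
  (forall t, f t = sum_f_R0 (fun i => c i * t ^ i) d) ->
  forall t, Derive_n f d t = c d * INR (fact d).
Proof.
elim: d c f => [|d IH] c f Hf t; first by rewrite /= Hf /=; ring.
rewrite -Nat.add_1_r -(Derive_n_comp f d 1) /=.
rewrite (Derive_n_ext _ (fun x => sum_f_R0 (fun i => c (S i) * INR (S i) * x ^ i) d)).
  by rewrite (IH (fun i => c (S i) * INR (S i))) // Nat.add_1_r fact_simpl mult_INR; ring.
move=> x; rewrite (Derive_ext _ (fun x => sum_f_R0 (fun i => c i * x ^ i) (S d))) //.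
exact/is_derive_unique/is_derive_poly.
Qed.

Lemma pow_one_sub_mul_le K s : 0 <= s <= 1 -> (1 - s) ^ K * (1 + INR K * s) <= 1.
Proof.
move=> Hs; elim: K => [|K IH]; first by rewrite /=; lra.
rewrite S_INR /=.
have HP : 0 <= (1 - s) ^ K by apply: pow_le; lra.
have : 0 <= (1 - s) ^ K * s ^ 2 * (INR K + 1).
  by apply: Rmult_le_pos; [apply: Rmult_le_pos; nra | have := pos_INR K; lra].
nra.
Qed.

(* Writing [trap n] through [Rmin] and [Rmax] makes its continuity routine. *)
Definition plateau (m t : R) : R := Rmax 0 (Rmin (Rmin (m * t) 1) (m * (1 - t))).

Lemma continuous_plateau m x : continuous (plateau m) x.
Proof.
apply: continuous_Rmax; first exact: continuous_const.
apply: continuous_Rmin; last by apply: ex_derive_continuous; auto_derive.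
apply: continuous_Rmin; last exact: continuous_const.
by apply: ex_derive_continuous; auto_derive.
Qed.

Ltac destruct_ifs :=
  repeat match goal with
  | |- context [Rcase_abs ?a] => destruct (Rcase_abs a)
  | |- context [Rle_dec ?a ?b] => destruct (Rle_dec a b)
  | _ : context [Rle_dec ?a ?b] |- _ => destruct (Rle_dec a b)
  end.

Lemma trap_out n x : 1 <= Rabs x -> trap n x = 0.
Proof. by rewrite /trap; case: Rle_dec. Qed.

Section Trapezoid.
Variable n : nat.
Hypothesis n_ge2 : (2 <= n)%nat.

Lemma INR_n_ge2 : 2 <= INR n.
Proof. by have := le_INR _ _ n_ge2; rewrite /=; lra. Qed.

Lemma INR_n_mul_inv : INR n * (1 / INR n) = 1.
Proof. by have := INR_n_ge2 => ?; field; lra. Qed.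

Lemma inv_INR_n_bounds : 0 < 1 / INR n <= 1 / 2.
Proof.
have Hm := INR_n_ge2; have Hu := INR_n_mul_inv.
split; first by apply: Rdiv_lt_0_compat; lra.
by apply: Rmult_le_reg_l (_ : 0 < INR n) _; lra.
Qed.

Lemma trap_plateau t : trap n t = plateau (INR n) t - plateau (INR n) (- t).
Proof.
have := INR_n_mul_inv; have := inv_INR_n_bounds; have := INR_n_ge2.
rewrite /trap /plateau /Rmax /Rmin /Rabs; set u := 1 / INR n => Hm Hu0 Hu.
destruct_ifs; nra.
Qed.

Lemma continuous_trap x : continuous (trap n) x.
Proof.
apply: (continuous_ext (fun t => plateau (INR n) t - plateau (INR n) (- t))).
  by move=> t; rewrite trap_plateau.
apply: continuous_plus; first exact: continuous_plateau.
apply: (continuous_opp (fun t => plateau (INR n) (- t))).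
apply: (continuous_comp Ropp); last exact: continuous_plateau.
by apply: ex_derive_continuous; auto_derive.
Qed.

Lemma trap_odd t : trap n (- t) = - trap n t.
Proof. by rewrite !trap_plateau Ropp_involutive; ring. Qed.

Lemma ex_RInt_trap_mul (h : R -> R) a b :
  (forall x, continuous h x) -> ex_RInt (fun x => trap n x * h x) a b.
Proof.
move=> Hh; apply: ex_RInt_continuous => x _.
by apply: continuous_mult; [exact: continuous_trap | exact: Hh].
Qed.

Lemma RInt_trap_mul_id : RInt (fun x => trap n x * x) (-1) 1 = 1 - 1 / INR n.
Proof.
set h := fun x => trap n x * x.
have Hh a b : ex_RInt h a b by apply: ex_RInt_trap_mul => x; exact: continuous_id.
have := INR_n_mul_inv; have := inv_INR_n_bounds; set u := 1 / INR n => Hu0 Hu.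
rewrite -(RInt_Chasles h (-1) (-1 + u) 1) // -(RInt_Chasles h (-1 + u) (- u) 1) //
  -(RInt_Chasles h (- u) u 1) // -(RInt_Chasles h u (1 - u) 1) //.
rewrite (RInt_quadratic_on h (-1) (-1 + u) 0 (- INR n) (- INR n))
  1?(RInt_quadratic_on h (-1 + u) (- u) 0 (-1) 0)
  1?(RInt_quadratic_on h (- u) u 0 0 (INR n))
  1?(RInt_quadratic_on h u (1 - u) 0 1 0)
  1?(RInt_quadratic_on h (1 - u) 1 0 (INR n) (- INR n)).
1: by rewrite /plus /= /u; have := INR_n_ge2 => ?; field; lra.
all: try lra.
all: by move=> x Hx; rewrite /h /trap /Rabs -/u; destruct_ifs; nra.
Qed.

End Trapezoid.

(* [kernel_coef m x i] is the coefficient of [t ^ i] in [(1 - (t - x) ^ 2 / 4) ^ m]; the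
   recursion multiplies by [1 - (t - x) ^ 2 / 4 = - t ^ 2 / 4 + x / 2 * t + (1 - x ^ 2 / 4)]. *)
Fixpoint kernel_coef (m : nat) (x : R) : nat -> R :=
  if m is S m' then fun i =>
    -1/4 * coef_shift (coef_shift (kernel_coef m' x)) i
    + x / 2 * coef_shift (kernel_coef m' x) i
    + (1 - x ^ 2 / 4) * kernel_coef m' x i
  else fun i => if i is O then 1 else 0.

Lemma kernel_coef_above m x i : (2 * m < i)%nat -> kernel_coef m x i = 0.
Proof.
elim: m i => [|m IH] [|[|i]] Hi //=; try lia.
by rewrite !IH; try lia; ring.
Qed.

Lemma kernel_coef_SS m x j : kernel_coef (S m) x (S (S j)) =
  -1/4 * kernel_coef m x j + x / 2 * kernel_coef m x (S j)
  + (1 - x ^ 2 / 4) * kernel_coef m x (S (S j)).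
Proof. by []. Qed.

Lemma kernel_coef_top m x : kernel_coef m x (2 * m) = (-1/4) ^ m.
Proof.
elim: m => [//|m IH].
have -> : (2 * S m = S (S (2 * m)))%nat by lia.
by rewrite kernel_coef_SS IH !kernel_coef_above; try lia; rewrite /=; ring.
Qed.

Lemma kernel_coef_subtop m x :
  kernel_coef (S m) x (S (2 * m)) = INR (S m) * (-1/4) ^ m * (x / 2).
Proof.
elim: m => [|m IH]; first by rewrite /=; field.
have -> : (S (2 * S m) = S (S (S (2 * m))))%nat by lia.
rewrite kernel_coef_SS IH.
have -> : (S (S (2 * m)) = 2 * S m)%nat by lia.
rewrite kernel_coef_top kernel_coef_above; last by lia.
by rewrite [INR (S (S m))]S_INR /=; field.
Qed.

Lemma kernel_coef_expand m t x :
  (1 - (t - x) ^ 2 / 4) ^ m = sum_f_R0 (fun i => kernel_coef m x i * t ^ i) (2 * m).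
Proof.
elim: m => [|m IH]; first by rewrite /=; field.
have -> : (2 * S m = S (S (2 * m)))%nat by lia.
set a := kernel_coef m x.
have Habove i : (2 * m < i)%nat -> a i = 0 by exact: kernel_coef_above.
rewrite (sum_eq _ (fun i => coef_shift (coef_shift a) i * t ^ i * (-1/4)
    + coef_shift a i * t ^ i * (x / 2) + a i * t ^ i * (1 - x ^ 2 / 4))); last first.
  by move=> i _; rewrite [kernel_coef (S m) x i]/= -/a; set ti := t ^ i; field.
rewrite !plus_sum -!scal_sum !sum_coef_shift.
rewrite !(sum_pow_above a t (2 * m)) -?IH //; try lia.
by rewrite /=; field.
Qed.

Lemma continuous_coef_shift (a : R -> nat -> R) i x :
  (forall j, continuous (fun y => a y j) x) -> continuous (fun y => coef_shift (a y) i) x.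
Proof. by case: i => [|i] Ha; [exact: continuous_const | exact: Ha]. Qed.

Lemma continuous_kernel_coef m i x : continuous (fun y => kernel_coef m y i) x.
Proof.
elim: m i => [|m IH] i /=; first by case: i => *; exact: continuous_const.
apply: continuous_plus; first apply: continuous_plus; apply: continuous_mult.
- exact: continuous_const.
- by apply: continuous_coef_shift => j; exact: continuous_coef_shift.
- by apply: ex_derive_continuous; auto_derive.
- exact: continuous_coef_shift.
- by apply: ex_derive_continuous; auto_derive.
- exact: IH.
Qed.

Lemma RInt_kernel_pos K : 0 < RInt (fun x => (1 - x ^ 2 / 4) ^ K) (-2) 2.
Proof.
have := RInt_lt (fun _ => 0) (fun x => (1 - x ^ 2 / 4) ^ K) (-2) 2.
rewrite RInt_const /scal /= /mult /= Rmult_0_r; apply; first lra.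
- by move=> x _; apply: ex_derive_continuous; auto_derive.
- by move=> x _; exact: continuous_const.
- by move=> x Hx; apply: pow_lt; nra.
Qed.

(* Bernoulli with [s = x^2/4] bounds the integrand by [1 / (1 + (k x / 2)^2)], whose
   integral is [(4 / k) atan k]. *)
Lemma RInt_kernel_le k : (1 <= k)%nat ->
  RInt (fun x => (1 - x ^ 2 / 4) ^ (k * k)) (-2) 2 <= 8 / INR k.
Proof.
move=> Hk; have Hk1 : 1 <= INR k by have := le_INR _ _ Hk.
apply: (Rle_trans _ (RInt (fun x => / (1 + (INR k * x / 2) ^ 2)) (-2) 2)).
  apply: RInt_le; first lra.
  - by apply: ex_RInt_continuous => x _; apply: ex_derive_continuous; auto_derive.
  - by apply: ex_RInt_continuous => x _; apply: ex_derive_continuous; auto_derive; nra.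
  move=> x Hx; set s := x ^ 2 / 4.
  have Hs : 0 <= s <= 1 by rewrite /s; nra.
  have -> : (INR k * x / 2) ^ 2 = INR (k * k) * s by rewrite mult_INR /s; field.
  have HB := pow_one_sub_mul_le (k * k) s Hs; have HK := pos_INR (k * k).
  apply: (Rmult_le_reg_r (1 + INR (k * k) * s)); first nra.
  by rewrite Rinv_l; nra.
rewrite (is_RInt_unique _ _ _ _ (is_RInt_derive
  (fun x => 2 / INR k * atan (INR k * x / 2)) _ (-2) 2 _ _)).
- rewrite /minus /plus /opp /=.
  have -> : INR k * 2 / 2 = INR k by field.
  have -> : INR k * -2 / 2 = - INR k by field.
  rewrite atan_opp; have := atan_bound (INR k); have := PI_4 => HPI Hat.
  apply: (Rmult_le_reg_r (INR k / 2)); first lra.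
  by field_simplify; lra.
- by move=> x _; auto_derive; [nra | field; split; nra].
- by move=> x _; apply: ex_derive_continuous; auto_derive; nra.
Qed.

Lemma ck_lower k : (1 <= k)%nat -> INR k / 8 <= ck k.
Proof.
move=> Hk; have Hk1 : 1 <= INR k by have := le_INR _ _ Hk.
have -> : INR k / 8 = / (8 / INR k) by field; lra.
exact/Rinv_le_contravar/RInt_kernel_le/Hk/RInt_kernel_pos.
Qed.

Lemma phik_even k x : phik k (- x) = phik k x.
Proof. by rewrite /phik; congr (_ * (1 - _ / 4) ^ _); ring. Qed.

Lemma continuous_phik k x : continuous (phik k) x.
Proof. by apply: ex_derive_continuous; rewrite /phik; auto_derive. Qed.

Definition Pk_coef n k i := ck k * RInt (fun x => trap n x * kernel_coef (k * k) x i) (-1) 1.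

Section Convolution.
Variables n k : nat.
Hypothesis n_ge2 : (2 <= n)%nat.

Lemma Pk_expand t : Pk n k t = sum_f_R0 (fun i => Pk_coef n k i * t ^ i) (2 * (k * k)).
Proof.
set g := fun i x => ck k * t ^ i * (trap n x * kernel_coef (k * k) x i).
have Hg i : ex_RInt (g i) (-1) 1.
  apply: (ex_RInt_scal (fun x => trap n x * kernel_coef (k * k) x i)).
  by apply: ex_RInt_trap_mul => // x; exact: continuous_kernel_coef.
rewrite /Pk (RInt_ext _ (fun x => sum_f_R0 (fun i => g i x) (2 * (k * k)))); last first.
  move=> x _; rewrite /phik kernel_coef_expand scal_sum scal_sum.
  by apply: sum_eq => i _; rewrite /g; set ti := t ^ i; ring.
rewrite RInt_sum_f_R0 //; apply: sum_eq => i _.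
rewrite /g /Pk_coef RInt_mult_l; first by set ti := t ^ i; ring.
by apply: ex_RInt_trap_mul => // x; exact: continuous_kernel_coef.
Qed.

Lemma continuous_convolution t x : continuous (fun y => trap n y * phik k (t - y)) x.
Proof.
apply: continuous_mult; first exact: continuous_trap.
apply: (continuous_comp (fun y => t - y)); last exact: continuous_phik.
by apply: ex_derive_continuous; auto_derive.
Qed.

Lemma ex_RInt_convolution_comp t (h : R -> R) a b : (forall x, ex_derive h x) ->
  ex_RInt (fun x => trap n (h x) * phik k (t - h x)) a b.
Proof.
move=> Hh; apply: ex_RInt_continuous => x _.
apply: (continuous_comp h (fun y => trap n y * phik k (t - y))).
  exact: ex_derive_continuous.
exact: continuous_convolution.
Qed.

Lemma ex_RInt_convolution t a b : ex_RInt (fun x => trap n x * phik k (t - x)) a b.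
Proof. by apply: ex_RInt_continuous => x _; exact: continuous_convolution. Qed.

Lemma Pk_odd t : Pk n k (- t) = - Pk n k t.
Proof.
set f := fun x => trap n x * phik k (t - x).
transitivity (RInt (fun x => -1 * f (0 - x)) (-1) 1).
  apply: RInt_ext => x _ /=; rewrite /f Rminus_0_l trap_odd // -phik_even.
  have -> : - (- t - x) = t - - x by ring.
  ring.
rewrite RInt_mult_l; last by apply: ex_RInt_convolution_comp => x; auto_derive.
rewrite RInt_comp_sub; last exact: ex_RInt_convolution.
have -> : 0 - 1 = -1 by ring.
have -> : 0 - -1 = 1 by ring.
by rewrite /f /Pk; ring.
Qed.

Lemma Pk_coef_lead : (1 <= k)%nat -> Pk_coef n k (2 * (k * k) - 1) = ak n k.
Proof.
move=> Hk; have Hm := INR_n_ge2 n n_ge2.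
rewrite /Pk_coef /ak; case EK: (k * k)%nat => [|K]; first lia.
have -> : (2 * S K - 1 = S (2 * K))%nat by lia.
rewrite (RInt_ext _ (fun x => INR (S K) * (-1/4) ^ K / 2 * (trap n x * x))); last first.
  by move=> x _; rewrite kernel_coef_subtop /=; field.
rewrite RInt_mult_l; last by apply: ex_RInt_trap_mul => // x; exact: continuous_id.
rewrite RInt_trap_mul_id //.
have -> : -1/4 = -1 * / 4 by field.
rewrite Rpow_mult_distr pow_inv Nat.add_1_r /=.
field; split; [lra | apply: pow_nonzero; lra].
Qed.

Lemma Pk_odd_poly : (1 <= k)%nat -> forall t,
  Pk n k t = sum_f_R0 (fun i => odd_part (Pk_coef n k) i * t ^ i) (2 * (k * k) - 1).
Proof.
move=> Hk t; rewrite (odd_poly_expand _ _ _ Pk_odd Pk_expand t).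
set N := (2 * (k * k) - 1)%nat; have -> : (2 * (k * k) = S N)%nat by rewrite /N; lia.
rewrite tech5 odd_part_even; first ring.
by exists (k * k)%nat; rewrite /N; lia.
Qed.

Lemma Pk_symmetrized t : -1 <= t <= 1 ->
  Pk n k t = RInt (fun x => (trap n (t + x) + trap n (t - x)) * phik k x) 0 2.
Proof.
move=> Ht; set g := fun x => trap n x * phik k (t - x).
have Hg u v : ex_RInt g u v by exact: ex_RInt_convolution.
transitivity (RInt g (t - 2) (t + 2)).
  symmetry; apply: RInt_supported => //; try lra; move=> x Hx; rewrite /g trap_out;
    [ring | rewrite Rabs_left; lra | ring | rewrite Rabs_right; lra].
transitivity (RInt (fun x => plus (g (t + x)) (g (t - x))) 0 2); last first.
  apply: RInt_ext => x _; rewrite /g /plus /= -(phik_even k (t - (t + x))).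
  have -> : - (t - (t + x)) = x by ring.
  have -> : t - (t - x) = x by ring.
  ring.
rewrite RInt_plus ?RInt_comp_add ?RInt_comp_sub //;
  try by apply: ex_RInt_convolution_comp => x; auto_derive.
by rewrite Rplus_0_r Rminus_0_r plus_comm RInt_Chasles.
Qed.
End Convolution.

Lemma ak_abs_lower n k : (2 <= n)%nat -> (1 <= k)%nat ->
  INR k ^ 3 / (8 * 4 ^ (k * k)) <= Rabs (ak n k).
Proof.
move=> Hn Hk; have Hk1 : 1 <= INR k by exact: (le_INR 1).
have Hc := ck_lower k Hk; have Hu0 := inv_INR_n_bounds n Hn.
have HiQ : 0 < / 4 ^ (k * k) by apply/Rinv_0_lt_compat/pow_lt; lra.
rewrite /ak !Rabs_mult pow_1_abs Rmult_1_l mult_INR.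
rewrite (Rabs_pos_eq (1 - _)) ?Rabs_pos_eq; try nra.
move: HiQ Hc Hu0; rewrite /Rdiv Rinv_mult.
set c := ck k; set u := 1 * / INR n; set iQ := / 4 ^ (k * k) => HiQ Hc Hu0.
have Hcu : INR k / 8 <= 2 * c * (1 - u) by nra.
have HkQ : 0 < INR k * INR k * iQ by apply: Rmult_lt_0_compat; nra.
nra.
Qed.

Lemma ak_nz n k : (2 <= n)%nat -> (1 <= k)%nat -> ak n k <> 0.
Proof.
move=> Hn Hk Hz; have := ak_abs_lower n k Hn Hk; rewrite Hz Rabs_R0.
have Hk1 : 1 <= INR k by exact: (le_INR 1).
have : 0 < INR k ^ 3 / (8 * 4 ^ (k * k)).
  by apply: Rdiv_lt_0_compat; [apply: pow_lt | apply: Rmult_lt_0_compat; [|apply: pow_lt]]; lra.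
lra.
Qed.

Theorem lemma2 :
  (forall (n k : nat), (2 <= n)%nat -> (1 <= k)%nat ->
     (exists coef : nat -> R,
        coef (2 * (k * k) - 1)%nat = ak n k /\
        ak n k <> 0 /\
        (forall i : nat, Nat.Even i -> coef i = 0) /\
        (forall t : R, Pk n k t = sum_f_R0 (fun i => coef i * t ^ i) (2 * (k * k) - 1))) /\
     (forall t : R, -1 <= t <= 1 ->
        Pk n k t = RInt (fun x => (trap n (t + x) + trap n (t - x)) * phik k x) 0 2)) /\
  (exists c0 : R, 0 < c0 /\
     forall (n k : nat), (2 <= n)%nat -> (1 <= k)%nat ->
     forall t : R,
       c0 * INR (fact (2 * (k * k) - 1)) * INR k ^ 3 / 4 ^ (k * k)
         <= Rabs (Derive_n (Pk n k) (2 * (k * k) - 1) t)).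
Proof.
have lead_odd k : (1 <= k)%nat -> Nat.Odd (2 * (k * k) - 1).
  by move=> Hk; exists (k * k - 1)%nat; lia.
split=> [n k Hn Hk|].
  split; last exact: Pk_symmetrized.
  exists (odd_part (Pk_coef n k)); split; last split; last split.
  - by rewrite odd_part_odd ?Pk_coef_lead //; exact: lead_odd.
  - exact: ak_nz.
  - exact: odd_part_even.
  - exact: Pk_odd_poly.
exists (1 / 8); split=> [|n k Hn Hk t]; first lra.
rewrite (Derive_n_poly _ _ _ (Pk_odd_poly n k Hn Hk)) odd_part_odd ?Pk_coef_lead //;
  last exact: lead_odd.
have HF : 0 < INR (fact (2 * (k * k) - 1)) by exact/lt_0_INR/lt_O_fact.
rewrite Rabs_mult (Rabs_pos_eq (INR _)); last lra.
have -> : 1 / 8 * INR (fact (2 * (k * k) - 1)) * INR k ^ 3 / 4 ^ (k * k)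
  = INR k ^ 3 / (8 * 4 ^ (k * k)) * INR (fact (2 * (k * k) - 1)).
  by field; apply: pow_nonzero; lra.
by apply: Rmult_le_compat_r; [lra | exact: ak_abs_lower].
Qed.
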